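(* Let $n,k$ be positive integers and let $Z$ be the graph with vertex set $\{z_{i,j}:1\le i\le k,\ 1\le j\le n\}$ ($k$ columns indexed by $i$, $n$ rows indexed by $j$) where, for $i<i'$, $z_{i,j}z_{i',j'}$ is an edge iff (1) $i$ is odd, $i'=i+1$ and $j>j'$; or (2) $i$ is even, $i'=i+1$ and $j\le j'$; or (3) $i$ is even, $i'$ is odd and $i'\ge i+3$. Then $Z$ is a $k$-letter graph.
   Context: Let $A$ be an alphabet with $k$ letters. A $k$-letter graph is a graph (up to isomorphism) defined by a finite word $a_1a_2\cdots a_m$ over $A$ together with a set $S\subseteq A\times A$: its vertex set is $\{1,\dots,m\}$ and its edge set is $\{pq: p<q,\ (a_p,a_q)\in S\}$. *)

From mathcomp Require Import all_boot.
Set Implicit Arguments. Unset Strict Implicit. Unset Printing Implicit Defensive.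

(* Letter graph on vertex set {0,...,m-1} (positions 1..m shifted by one),
   given a word w : 'I_m -> 'I_k over the alphabet 'I_k and S ⊆ A×A as a rel:
   pq is an edge iff p < q and (w p, w q) ∈ S. *)
Definition letter_adj (k m : nat) (w : 'I_m -> 'I_k) (S : rel 'I_k) : rel 'I_m :=
  fun p q => ((p < q)%N && S (w p) (w q)) || ((q < p)%N && S (w q) (w p)).

Definition is_letter_graph (k : nat) (V : finType) (e : rel V) : Prop :=
  exists (m : nat) (w : 'I_m -> 'I_k) (S : rel 'I_k) (f : V -> 'I_m),
    bijective f /\ forall x y, e x y = letter_adj w S (f x) (f y).

Definition Z_cond (i j i' j' : nat) : bool :=
  [|| [&& odd i, i' == i.+1 & j' < j],
      [&& ~~ odd i, i' == i.+1 & j <= j'] |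
      [&& ~~ odd i, odd i' & i + 3 <= i'] ].

(* Vertex (i, j) : 'I_k * 'I_n stands for z_{i+1, j+1}. *)
Definition Z_adj (k n : nat) : rel ('I_k * 'I_n) :=
  fun x y =>
    let i := (val x.1).+1 in let j := (val x.2).+1 in
    let i' := (val y.1).+1 in let j' := (val y.2).+1 in
    if i < i' then Z_cond i j i' j'
    else if i' < i then Z_cond i' j' i j
    else false.

(* Read the vertices of Z row by row (row 1 first, columns 1..k within a row)
   and label each vertex by its column.  For two columns i < i' the edge rule
   of Z only depends on which of z_{i,j}, z_{i',j'} comes first: for i odd and
   i' = i + 1 the edge exists iff z_{i',j'} is read first, for i even and
   i' = i + 1 iff z_{i,j} is read first, and for the remaining edge type it
   exists in both orders. *)

From mathcomp Require Import all_boot zify.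

Lemma letter_graph_of_ranking (k m : nat) (V : finType) (e : rel V)
    (f : V -> 'I_m) (l : V -> 'I_k) (S : rel 'I_k) :
  bijective f ->
  (forall x y, e x y = ((f x < f y) && S (l x) (l y)) || ((f y < f x) && S (l y) (l x))) ->
  is_letter_graph k e.
Proof.
case=> g fK gK he; exists m, (l \o g), S, f; split; first by exists g.
by move=> x y; rewrite he /letter_adj /= !fK.
Qed.

Section RowMajor.

Variables k n : nat.

Lemma row_major_subproof (x : 'I_k * 'I_n) : x.2 * k + x.1 < n * k.
Proof. case: x => [[c hc] [r hr]] /=; nia. Qed.

Definition row_major (x : 'I_k * 'I_n) : 'I_(n * k) := Ordinal (row_major_subproof x).

Lemma row_major_col_subproof (p : 'I_(n * k)) : p %% k < k.
Proof. by rewrite ltn_mod; case: k p => [|k'] [p] //=; rewrite muln0. Qed.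

Lemma row_major_row_subproof (p : 'I_(n * k)) : p %/ k < n.
Proof. by rewrite ltn_divLR ?ltn_ord // (leq_ltn_trans _ (row_major_col_subproof p)). Qed.

Lemma row_major_bij : bijective row_major.
Proof.
exists (fun p => (Ordinal (row_major_col_subproof p), Ordinal (row_major_row_subproof p))).
- move=> [[c hc] [r hr]]; congr (_, _); apply: val_inj => /=.
    by rewrite modnMDl modn_small.
  by rewrite divnMDl ?divn_small ?addn0 //; apply: leq_ltn_trans hc.
- by move=> p; apply: val_inj; rewrite /= -divn_eq.
Qed.

Lemma ltn_row_major (x y : 'I_k * 'I_n) :
  (row_major x < row_major y) = (x.2 < y.2) || (x.2 == y.2) && (x.1 < y.1).
Proof.
case: x y => [[c hc] [r hr]] [[c' hc'] [r' hr']]; rewrite -val_eqE /=.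
case: (ltngtP r r') => hrr' /=.
- by apply/idP; nia.
- by apply/negbTE; rewrite -leqNgt; nia.
- by rewrite hrr' ltn_add2l.
Qed.

End RowMajor.

Arguments row_major {k n} x.

(* Columns are 0-indexed here, so column a of the word is column a + 1 of Z. *)
Definition Z_letter_rel (a b : nat) : bool :=
  [|| odd a && (b == a.+1), ~~ odd b && (a == b.+1),
      [&& odd a, ~~ odd b & a + 3 <= b] | [&& odd b, ~~ odd a & b + 3 <= a]].

Lemma Z_adj_row_major (k n : nat) (x y : 'I_k * 'I_n) :
  Z_adj x y =
    ((row_major x < row_major y) && Z_letter_rel x.1 y.1)
    || ((row_major y < row_major x) && Z_letter_rel y.1 x.1).
Proof.
case: x y => [[a ha] [u hu]] [[b hb] [v hv]].
rewrite !ltn_row_major -!val_eqE /Z_adj /= /Z_letter_rel /Z_cond !addSn !ltnS !oddS.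
by case: (ltngtP a b) => hab; case: (odd a); case: (odd b) => /=; lia.
Qed.

Theorem lemma15 (n k : nat) (hn : 0 < n) (hk : 0 < k) :
  is_letter_graph k (@Z_adj k n).
Proof.
apply: (@letter_graph_of_ranking k (n * k) _ _ row_major fst
  (fun a b => Z_letter_rel a b) (@row_major_bij k n)).
exact: Z_adj_row_major.
Qed.
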